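(* Let $G$ be a finite group, $s \in G^{\#}$ and $c$ a positive integer. Let $\{x_1,\ldots,x_k\}$ be a set of representatives of the conjugacy classes of elements of prime order in $G$. Then \[ Q(G,s,c) \leqslant \sum_{i=1}^{k} |x_i^G| \left( \sum_{H \in \mathcal{M}(G,s)} {\rm fpr}(x_i,G/H) \right)^c. \]
   Context: $G^{\#}$ is the set of non-identity elements of $G$. A subset $S\subseteq G^{\#}$ is a total dominating set for the generating graph of $G$ if for every $g\in G^{\#}$ there exists $z\in S$ with $G=\langle g,z\rangle$. $Q(G,s,c)$ is the probability that for a uniformly random $c$-tuple $(z_1,\ldots,z_c)$ of conjugates of $s$, the set $\{z_1,\ldots,z_c\}$ is not a total dominating set. $\mathcal{M}(G,s)$ is the set of maximal subgroups of $G$ containing $s$. For $x\in G$ and $H<G$, ${\rm fpr}(x,G/H)=|x^G\cap H|/|x^G|$ (the fixed point ratio of $x$ on $G/H$). *)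

From HB Require Import structures.
From mathcomp Require Import all_boot all_order all_algebra all_fingroup all_solvable.
Set Implicit Arguments. Unset Strict Implicit. Unset Printing Implicit Defensive.
Import GRing.Theory Num.Theory.
Local Open Scope group_scope.

Definition total_dominating {gT : finGroupType} (G : {group gT}) (S : {set gT}) : bool :=
  (S \subset G^#) &&
  [forall g in G^#, [exists z in S, <<[set g; z]>> == G :> {set gT}]].

Definition Qprob {gT : finGroupType} (G : {group gT}) (s : gT) (c : nat) : rat :=
  (#|[set t : c.-tuple gT | all (fun z => z \in s ^: G) t
        && ~~ total_dominating G [set z in t]]|%:R
   / (#|s ^: G| ^ c)%:R)%R.

Definition maxsub_containing {gT : finGroupType} (G : {group gT}) (s : gT)
  (H : {group gT}) : bool := maximal H G && (s \in H).

Definition fpr {gT : finGroupType} (G H : {group gT}) (x : gT) : rat :=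
  (#|(x ^: G) :&: H|%:R / #|x ^: G|%:R)%R.

Definition prime_order_class_reps {gT : finGroupType} (G : {group gT}) (X : {set gT}) : Prop :=
  [/\ X \subset G,
      (forall x, x \in X -> prime #[x]),
      (forall y, y \in G -> prime #[y] -> exists2 x, x \in X & y \in x ^: G) &
      (forall x1 x2, x1 \in X -> x2 \in X -> x1 \in x2 ^: G -> x1 = x2)].

(* If the conjugates z_1, ..., z_c of s do not form a total dominating set,
   some g <> 1 generates a proper subgroup together with each z_j, hence so
   does any y of prime order in <g>: each z_j then shares a maximal subgroup
   with y.  A union bound over y reduces Q(G,s,c) to the c-th powers of the
   proportion of conjugates of s sharing a maximal subgroup with y; counting
   over g in G, this proportion is the probability that s and y^g share one,
   which is at most the sum of fpr(y, G/H) over H in M(G,s).  Grouping the y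
   by conjugacy class yields the factors |x_i^G|. *)

From mathcomp Require Import all_boot all_order all_algebra all_fingroup all_solvable.
Import Order.POrderTheory GRing.Theory Num.Theory.
Set Implicit Arguments. Unset Strict Implicit. Unset Printing Implicit Defensive.

Lemma leq_card_bigcup (I T : finType) (P : pred I) (B : I -> {set T}) :
  #|\bigcup_(i | P i) B i| <= \sum_(i | P i) #|B i|.
Proof.
elim/big_ind2: _ => [|a U b V leUa leVb|//]; first by rewrite cards0.
exact: leq_trans (leq_card_setU U V) (leq_add leUa leVb).
Qed.

Lemma card_tuples_in (T : finType) (A : {set T}) n :
  #|[set t : n.-tuple T | all (mem A) t]| = #|A| ^ n.
Proof.
pose f (t : n.-tuple T) := [ffun i => tnth t i].
have f_inj : injective f.
  move=> t u /ffunP eq_tu; apply: eq_from_tnth => i.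
  by have := eq_tu i; rewrite !ffunE.
rewrite -[n in _ ^ n]card_ord -card_ffun_on -(card_imset _ f_inj).
apply: eq_card => g; rewrite inE; apply/imsetP/ffun_onP => [[t] | gA].
  by rewrite inE => /all_tnthP tA -> i; rewrite ffunE; apply: tA.
exists [tuple g i | i < n].
  by rewrite inE; apply/all_tnthP => i; rewrite tnth_mktuple; apply: gA.
by apply/ffunP => i; rewrite !ffunE tnth_mktuple.
Qed.

Section ClassCounting.
Local Open Scope group_scope.
Variables (gT : finGroupType) (G : {group gT}).
Implicit Types (x y z g : gT).

Lemma conjg_fix_cent1 x y : (x ^ y == x) = (y \in 'C[x]).
Proof. by rewrite (sameP eqP conjg_fixP) cent1C; apply: (sameP commgP cent1P). Qed.

Lemma card_conj_preim x (P : pred gT) :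
  #|[set g in G | P (x ^ g)]| = (#|'C_G[x]| * #|[set z in x ^: G | P z]|)%N.
Proof.
rewrite -sum1_card mulnC -sum_nat_const.
rewrite (partition_big (conjg x) (mem [set z in x ^: G | P z])) => [|g]; last first.
  by rewrite !inE => /andP[gG Pxg]; rewrite memJ_class.
apply: eq_bigr => _ /setIdP[/imsetP[h hG ->] Pxh]; rewrite -(card_rcoset _ h) -sum1_card.
apply: eq_bigl => g; rewrite !inE mem_rcoset in_setI groupMr ?groupV //.
rewrite -conjg_fix_cent1 conjgM (can2_eq (conjgKV h) (conjgK h)).
by case: (g \in G) => //=; case: eqP => [-> | _]; rewrite ?Pxh ?andbF.
Qed.

Lemma class_ratio_conj (R : numFieldType) x (P : pred gT) :
  (#|[set z in x ^: G | P z]|%:R / #|x ^: G|%:R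
     = #|[set g in G | P (x ^ g)%g]|%:R / #|G|%:R :> R)%R.
Proof.
rewrite card_conj_preim -(Lagrange (subsetIl G 'C[x])) index_cent1.
by rewrite !natrM -mulf_div divff ?mul1r // pnatr_eq0 -lt0n cardG_gt0.
Qed.

Lemma sum_class_reps (R : nmodType) (P : pred gT) (X : {set gT}) (F : gT -> R) :
    (forall y, P y -> exists2 x, x \in X & y \in x ^: G) ->
    (forall x y, x \in X -> y \in x ^: G -> P y) ->
    {in X &, forall x1 x2, x1 \in x2 ^: G -> x1 = x2} ->
    (forall x y, y \in x ^: G -> F y = F x) ->
  (\sum_(y | P y) F y = \sum_(x in X) F x *+ #|x ^: G|)%R.
Proof.
move=> Pcover XP Xuniq Fclass.
have class_inj : {in X &, injective (fun x => x ^: G)}.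
  by move=> x1 x2 x1X x2X eq12; apply: Xuniq; rewrite // -eq12 class_refl.
rewrite (partition_big (fun y => y ^: G) (mem ((fun x => x ^: G) @: X))) => [|y Py].
  rewrite big_imset //=; apply: eq_bigr => x xX; rewrite -sumr_const.
  apply: eq_big => [y | y /andP[_ /eqP/class_eqP]]; last exact: Fclass.
  apply/andP/idP => [[_ /eqP/class_eqP] // | yx]; split; first exact: XP yx.
  exact/eqP/class_eqP.
by have [x xX yx] := Pcover y Py; apply/imsetP; exists x => //; apply/class_eqP.
Qed.

End ClassCounting.

Section Comaximal.
Local Open Scope group_scope.
Variables (gT : finGroupType) (G : {group gT}).
Implicit Types (x y z g : gT).

Definition comaximal x y : bool :=
  [exists M : {group gT}, [&& maximal M G, x \in M & y \in M]].

Lemma comaximalJ x y g : g \in G -> comaximal (x ^ g) (y ^ g) = comaximal x y.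
Proof.
suff comaxJ x' y' g' : g' \in G -> comaximal x' y' -> comaximal (x' ^ g') (y' ^ g').
  move=> gG; apply/idP/idP; last exact: comaxJ.
  by move/(comaxJ _ _ g^-1); rewrite !conjgK groupV; apply.
move=> gG /existsP[M /and3P[maxM xM yM]]; apply/existsP; exists (M :^ g')%G.
by rewrite -{1}(conjGid gG) maximalJ !memJ_conjg xM yM maxM.
Qed.

Lemma comaximal_gen2 g x y : g \in G -> x \in G -> <<[set g; x]>> != G ->
  y \in <[g]> -> comaximal x y.
Proof.
move=> gG xG genG yg; have sgxG : <<[set g; x]>> \subset G.
  by rewrite gen_subG; apply/subsetP => z /set2P[] ->.
have [genE | [M maxM sgxM]] := maximal_exists sgxG; first by rewrite genE eqxx in genG.
apply/existsP; exists M; rewrite maxM /=; apply/andP; split; apply: (subsetP sgxM).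
  by rewrite mem_gen ?set22.
by apply: subsetP yg; rewrite cycle_subG mem_gen ?set21.
Qed.

Lemma nondominating_comaximal s (t : seq gT) : s \in G^# ->
    all (mem (s ^: G)) t -> ~~ total_dominating G [set z in t] ->
  exists2 y, (y \in G) && prime #[y] & all (comaximal^~ y) t.
Proof.
move=> /setD1P[s1 sG] ts; have tG := allP ts.
have tG1 : [set z in t] \subset G^#.
  apply/subsetP => z; rewrite inE => /tG/imsetP[h hG ->].
  by rewrite !inE conjg_eq1 s1 groupJ.
rewrite /total_dominating tG1 => /forallPn[g]; rewrite negb_imply.
case/andP=> /setD1P[g1 gG] /existsPn ngen; rewrite -order_gt1 in g1.
have [y yg oy] := Cauchy (pdiv_prime g1) (pdiv_dvd #[g]).
have yG : y \in G by apply: subsetP yg; rewrite cycle_subG.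
exists y; first by rewrite yG oy pdiv_prime.
apply/allP => z zt; have /imsetP[h hG zE] := tG z zt.
apply: comaximal_gen2 gG _ _ yg; first by rewrite zE groupJ.
by have := ngen z; rewrite inE zt.
Qed.

Lemma card_nondominating_tuples s c : s \in G^# ->
  #|[set t : c.-tuple gT | all (fun z => z \in s ^: G) t
                           && ~~ total_dominating G [set z in t]]|
    <= \sum_(y in G | prime #[y]) #|[set z in s ^: G | comaximal z y]| ^ c.
Proof.
move=> sG1; under eq_bigr do rewrite -card_tuples_in.
apply: leq_trans (leq_card_bigcup _ _); apply/subset_leq_card/subsetP => t.
rewrite inE => /andP[ts ntd]; have [y Py tyc] := nondominating_comaximal sG1 ts ntd.
apply/bigcupP; exists y => //; rewrite inE; apply/allP => z zt.
by rewrite /= inE (allP ts) // (allP tyc).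
Qed.

Lemma comaximal_ratio_le s y :
  (#|[set z in s ^: G | comaximal z y]|%:R / #|s ^: G|%:R
     <= \sum_(H : {group gT} | maxsub_containing G s H) fpr G H y :> rat)%R.
Proof.
have fprE H : fpr G H y = (#|[set g in G | (y ^ g)%g \in H]|%:R / #|G|%:R)%R.
  by rewrite /fpr -class_ratio_conj.
rewrite class_ratio_conj // (eq_bigr _ (fun H _ => fprE H)) -mulr_suml -natr_sum.
rewrite ler_pM2r ?invr_gt0 ?ltr0n ?cardG_gt0 // ler_nat.
have -> : #|[set g in G | comaximal (s ^ g) y]| = #|[set g in G | comaximal s (y ^ g)]|.
  rewrite -(card_preimset _ (@invg_inj gT)); apply: eq_card => g; rewrite !inE groupV.
  by case: (boolP (g \in G)) => //= gG; rewrite -(comaximalJ s _ (groupVr gG)) conjgK.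
apply: leq_trans (leq_card_bigcup _ _); apply/subset_leq_card/subsetP => g.
rewrite inE => /andP[gG /existsP[M /and3P[maxM sM ygM]]].
by apply/bigcupP; exists M; rewrite /maxsub_containing ?inE ?maxM ?sM ?gG.
Qed.

Lemma Qprob_le_sum_prime_order s c : s \in G^# ->
  (Qprob G s c <= \sum_(y in G | prime #[y])
     (\sum_(H : {group gT} | maxsub_containing G s H) fpr G H y) ^+ c)%R.
Proof.
move=> sG1; have sG_gt0 : 0 < #|s ^: G| by apply/card_gt0P; exists s; apply: class_refl.
rewrite /Qprob; apply: le_trans (_ : _ <= (\sum_(y in G | prime #[y])
    #|[set z in s ^: G | comaximal z y]| ^ c)%:R / (#|s ^: G| ^ c)%:R)%R _.
  rewrite ler_pM2r ?invr_gt0 ?ltr0n ?expn_gt0 ?sG_gt0 // ler_nat.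
  exact: card_nondominating_tuples.
rewrite natr_sum mulr_suml; apply: ler_sum => y _.
rewrite !natrX -expr_div_n lerXn2r ?nnegrE ?divr_ge0 ?comaximal_ratio_le //.
by apply: sumr_ge0 => H _; rewrite divr_ge0.
Qed.

End Comaximal.

Theorem lemma2p5 (gT : finGroupType) (G : {group gT}) (s : gT) (c : nat)
  (X : {set gT}) :
  s \in G^#%g -> (0 < c)%N -> prime_order_class_reps G X ->
  (Qprob G s c <=
   \sum_(x in X) #|(x ^: G)%g|%:R *
     (\sum_(H : {group gT} | maxsub_containing G s H) fpr G H x) ^+ c)%R.
Proof.
move=> sG1 _ [XG Xprime Xcover Xuniq].
apply: le_trans (Qprob_le_sum_prime_order c sG1) _.
rewrite (sum_class_reps _ _ Xuniq) => [||x y xX /imsetP[g gG ->]|x y yx].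
- by apply: ler_sum => x _; rewrite mulr_natl.
- by move=> y /andP[]; apply: Xcover.
- by rewrite groupJ ?orderJ ?Xprime ?(subsetP XG x xX).
by under eq_bigr do rewrite /fpr (class_eqP yx).
Qed.
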